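(* Let $(\mathbf{x}^0,\mathbf{Z}^0,\Gamma^0)$ be any initialization with $\mathbf{x}^0\in\mathcal{X}$, and let $\{(\mathbf{x}^n,\mathbf{Z}^n,\Gamma^n)\}_{n\ge 0}$ be generated by the SPULTRA iteration defined in the context, where the image update step is solved exactly. Then: (i) the sequence $\{(\mathbf{x}^n,\mathbf{Z}^n,\Gamma^n)\}$ is bounded; (ii) the objective sequence $\{G(\mathbf{x}^n,\mathbf{Z}^n,\Gamma^n)\}$ is monotonically nonincreasing and converges to a finite limit $G^*=G^*(\mathbf{x}^0,\mathbf{Z}^0,\Gamma^0)$; (iii) every accumulation point $(\mathbf{x}^*,\mathbf{Z}^*,\Gamma^* )$ of the iterate sequence satisfies $G(\mathbf{x}^*,\mathbf{Z}^*,\Gamma^* )=G^*$; (iv) every accumulation point $(\mathbf{x}^*,\mathbf{Z}^*,\Gamma^* )$ satisfies the partial optimality conditions $$\mathbf{0}\in\partial_{\mathbf{x}}G(\mathbf{x},\mathbf{Z}^*,\Gamma^* )\big|_{\mathbf{x}=\mathbf{x}^*},\qquad (\mathbf{Z}^*,\Gamma^* )\in\arg\min_{\mathbf{Z},\Gamma}G(\mathbf{x}^*,\mathbf{Z},\Gamma),$$ where $\partial_{\mathbf{x}}$ denotes the (limiting) subdifferential of $G$ with respect to $\mathbf{x}$; (v) $\|\mathbf{x}^{n+1}-\mathbf{x}^n\|_2\to 0$ as $n\to\infty$.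
   Context: Data and model. $\mathbf{A}\in\mathbb{R}^{N_d\times N_p}$ is a matrix with nonnegative entries; write $l_i(\mathbf{x})=[\mathbf{A}\mathbf{x}]_i$. Constants: $I_0>0$, $\sigma^2\ge 0$, measurements $Y_i\in\mathbb{R}$, coefficients $s_{1_i},s_{2_i}\in\mathbb{R}$, $x_{\max}>0$. Let $f_i(l)=s_{1_i}l+s_{2_i}l^2$ and $$h_i(l)=\big(I_0e^{-f_i(l)}+\sigma^2\big)-Y_i\log\big(I_0e^{-f_i(l)}+\sigma^2\big),\qquad \mathsf{L}(\mathbf{x})=\sum_{i=1}^{N_d}h_i(l_i(\mathbf{x})).$$ Let $\mathcal{X}=\{\mathbf{x}\in\mathbb{R}^{N_p}:0\le x_j\le x_{\max}\ \forall j\}$ and $\mathfrak{X}(\mathbf{x})=0$ if $\mathbf{x}\in\mathcal{X}$, $+\infty$ otherwise. Regularizer. For $j=1,\dots,\tilde N$, $\mathbf{P}_j\in\mathbb{R}^{v\times N_p}$ extracts the $j$-th patch of $v$ voxels (a row-selection matrix); assume every voxel belongs to at least one patch. $\boldsymbol{\Omega}_1,\dots,\boldsymbol{\Omega}_K\in\mathbb{R}^{v\times v}$ are fixed nonsingular (pre-learned) transforms. Weights $\tau_j>0$, and $\beta>0$, $\gamma_c>0$. Variables: sparse code matrix $\mathbf{Z}=[\mathbf{z}_1,\dots,\mathbf{z}_{\tilde N}]$ with $\mathbf{z}_j\in\mathbb{R}^v$, and class vector $\Gamma\in\{1,\dots,K\}^{\tilde N}$. Define $$\mathsf{R}(\mathbf{x},\mathbf{Z},\Gamma)=\beta\sum_{j=1}^{\tilde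 N}\tau_j\Big(\|\boldsymbol{\Omega}_{\Gamma_j}\mathbf{P}_j\mathbf{x}-\mathbf{z}_j\|_2^2+\gamma_c^2\|\mathbf{z}_j\|_0\Big),$$ where $\|\cdot\|_0$ counts nonzero entries. The objective is $G(\mathbf{x},\mathbf{Z},\Gamma)=\mathsf{L}(\mathbf{x})+\mathsf{R}(\mathbf{x},\mathbf{Z},\Gamma)+\mathfrak{X}(\mathbf{x})$. Surrogates. Curvature functions $c_i:[0,\infty)\to(0,\infty)$ are continuous and chosen so that, with $$q_i(l;\bar l)=h_i(\bar l)+\dot h_i(\bar l)(l-\bar l)+\tfrac12 c_i(\bar l)(l-\bar l)^2,$$ one has $h_i(l)\le q_i(l;\bar l)$ for all $l\ge0$, $\bar l\ge 0$ (as achieved by the optimum-curvature rule $c_i(\bar l)=2\,[h_i(0)-h_i(\bar l)+\bar l\,\dot h_i(\bar l)]/\bar l^2$ for $\bar l>0$, $c_i(0)=\ddot h_i(0)$, with nonpositive values replaced by a small positive constant). For $\bar{\mathbf{x}}\in\mathcal{X}$ define the majorizer $$F(\mathbf{x},\mathbf{Z},\Gamma;\bar{\mathbf{x}})=\sum_{i=1}^{N_d}q_i\big(l_i(\mathbf{x});l_i(\bar{\mathbf{x}})\big)+\mathsf{R}(\mathbf{x},\mathbf{Z},\Gamma)+\mathfrak{X}(\mathbf{x}).$$ SPULTRA iteration (exact version). Given $(\mathbf{x}^n,\mathbf{Z}^n,\Gamma^n)$: image update $\mathbf{x}^{n+1}\in\arg\min_{\mathbf{x}}F(\mathbf{x},\mathbf{Z}^n,\Gamma^n;\mathbf{x}^n)$;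 then sparse coding and clustering $(\mathbf{Z}^{n+1},\Gamma^{n+1})\in\arg\min_{\mathbf{Z},\Gamma}\mathsf{R}(\mathbf{x}^{n+1},\mathbf{Z},\Gamma)$ (computed exactly: for each $j$, $\Gamma_j^{n+1}$ minimizes over $k$ the value $\|\boldsymbol{\Omega}_k\mathbf{P}_j\mathbf{x}^{n+1}-H_{\gamma_c}(\boldsymbol{\Omega}_k\mathbf{P}_j\mathbf{x}^{n+1})\|_2^2+\gamma_c^2\|H_{\gamma_c}(\boldsymbol{\Omega}_k\mathbf{P}_j\mathbf{x}^{n+1})\|_0$ and $\mathbf{z}_j^{n+1}=H_{\gamma_c}(\boldsymbol{\Omega}_{\Gamma_j^{n+1}}\mathbf{P}_j\mathbf{x}^{n+1})$, where $H_{\gamma_c}$ zeroes entries of magnitude less than $\gamma_c$ and keeps the others). *)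

From Stdlib Require Import Reals Lra.
Open Scope R_scope.

(* Vectors/matrices are functions on nat; only indices below the stated
   dimension matter.  sumR n f = f 0 + ... + f (n-1). *)
Fixpoint sumR (n : nat) (f : nat -> R) : R :=
  match n with O => 0 | S m => sumR m f + f m end.

Fixpoint allb (n : nat) (P : nat -> bool) : bool :=
  match n with O => true | S m => andb (allb m P) (P m) end.

(* Extended reals needed for the indicator function of the box. *)
Inductive ER : Type := Fin (r : R) | PInf.

Definition ER_le (a b : ER) : Prop :=
  match a, b with
  | Fin x, Fin y => x <= y
  | _, PInf => True
  | PInf, Fin _ => False
  end.

Definition dotn (n : nat) (u w : nat -> R) : R := sumR n (fun i => u i * w i).
Definition norm2 (n : nat) (u : nat -> R) : R := sqrt (dotn n u u).
Definition vsub (u w : nat -> R) : nat -> R := fun i => u i - w i.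

Definition vec_cv (n : nat) (xs : nat -> nat -> R) (x : nat -> R) : Prop :=
  forall i, (i < n)%nat -> Un_cv (fun k => xs k i) (x i).

Definition proj_l (Np : nat) (A : nat -> nat -> R) (x : nat -> R) (i : nat) : R :=
  sumR Np (fun p => A i p * x p).

Definition fi (s1 s2 : nat -> R) (i : nat) (l : R) : R := s1 i * l + s2 i * l ^ 2.
Definition gi (I0 sigma2 : R) (s1 s2 : nat -> R) (i : nat) (l : R) : R :=
  I0 * exp (- fi s1 s2 i l) + sigma2.
Definition hi (I0 sigma2 : R) (Y s1 s2 : nat -> R) (i : nat) (l : R) : R :=
  gi I0 sigma2 s1 s2 i l - Y i * ln (gi I0 sigma2 s1 s2 i l).
Definition hdot (I0 sigma2 : R) (Y s1 s2 : nat -> R) (i : nat) (l : R) : R :=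
  (- I0 * exp (- fi s1 s2 i l) * (s1 i + 2 * s2 i * l))
  * (1 - Y i / gi I0 sigma2 s1 s2 i l).

Definition qi (I0 sigma2 : R) (Y s1 s2 : nat -> R) (c : nat -> R -> R)
  (i : nat) (l lbar : R) : R :=
  hi I0 sigma2 Y s1 s2 i lbar + hdot I0 sigma2 Y s1 s2 i lbar * (l - lbar)
  + / 2 * c i lbar * (l - lbar) ^ 2.

Definition Lfid (Nd Np : nat) (A : nat -> nat -> R) (I0 sigma2 : R)
  (Y s1 s2 : nat -> R) (x : nat -> R) : R :=
  sumR Nd (fun i => hi I0 sigma2 Y s1 s2 i (proj_l Np A x i)).

Definition inX (Np : nat) (xmax : R) (x : nat -> R) : Prop :=
  forall p, (p < Np)%nat -> 0 <= x p <= xmax.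
Definition inXb (Np : nat) (xmax : R) (x : nat -> R) : bool :=
  allb Np (fun p => andb (if Rle_dec 0 (x p) then true else false)
                         (if Rle_dec (x p) xmax then true else false)).

Definition l0 (v : nat) (z : nat -> R) : R :=
  sumR v (fun r => if Req_EM_T (z r) 0 then 0 else 1).

(* || Omega_k P_j x - z ||_2^2 ; P_j x = (x (patch j 0), ..., x (patch j (v-1))) *)
Definition patch_res (v : nat) (Om : nat -> nat -> nat -> R)
  (patch : nat -> nat -> nat) (k j : nat) (x z : nat -> R) : R :=
  sumR v (fun r => (sumR v (fun col => Om k r col * x (patch j col)) - z r) ^ 2).

(* regularizer R(x, Z, Gamma); Z j = z_j, classes are 0..K-1 *)
Definition Reg (v Ntil : nat) (Om : nat -> nat -> nat -> R) (patch : nat -> nat -> nat)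
  (tau : nat -> R) (beta gc : R)
  (x : nat -> R) (Z : nat -> nat -> R) (Gm : nat -> nat) : R :=
  beta * sumR Ntil (fun j => tau j *
     (patch_res v Om patch (Gm j) j x (Z j) + gc ^ 2 * l0 v (Z j))).

Definition Gobj (Nd Np v Ntil : nat) (A : nat -> nat -> R) (I0 sigma2 : R)
  (Y s1 s2 : nat -> R) (xmax : R) (Om : nat -> nat -> nat -> R)
  (patch : nat -> nat -> nat) (tau : nat -> R) (beta gc : R)
  (x : nat -> R) (Z : nat -> nat -> R) (Gm : nat -> nat) : ER :=
  if inXb Np xmax x then
    Fin (Lfid Nd Np A I0 sigma2 Y s1 s2 x + Reg v Ntil Om patch tau beta gc x Z Gm)
  else PInf.

Definition Fmaj (Nd Np v Ntil : nat) (A : nat -> nat -> R) (I0 sigma2 : R)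
  (Y s1 s2 : nat -> R) (c : nat -> R -> R) (xmax : R)
  (Om : nat -> nat -> nat -> R) (patch : nat -> nat -> nat) (tau : nat -> R)
  (beta gc : R) (x : nat -> R) (Z : nat -> nat -> R) (Gm : nat -> nat)
  (xbar : nat -> R) : ER :=
  if inXb Np xmax x then
    Fin (sumR Nd (fun i => qi I0 sigma2 Y s1 s2 c i (proj_l Np A x i) (proj_l Np A xbar i))
         + Reg v Ntil Om patch tau beta gc x Z Gm)
  else PInf.

Definition frechet_subgrad (n : nat) (f : (nat -> R) -> ER) (x v : nat -> R) : Prop :=
  exists fx, f x = Fin fx /\
  forall eps, 0 < eps -> exists delta, 0 < delta /\
    forall y, norm2 n (vsub y x) < delta ->
      ER_le (Fin (fx + dotn n v (vsub y x) - eps * norm2 n (vsub y x))) (f y).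

Definition limiting_subgrad (n : nat) (f : (nat -> R) -> ER) (x v : nat -> R) : Prop :=
  exists (fx : R) (xk vk : nat -> nat -> R) (fk : nat -> R),
    f x = Fin fx /\
    (forall k, f (xk k) = Fin (fk k)) /\
    vec_cv n xk x /\ Un_cv fk fx /\
    (forall k, frechet_subgrad n f (xk k) (vk k)) /\
    vec_cv n vk v.

(* accumulation point of the iterates (x^n, Z^n, Gamma^n);
   Gamma takes values in a finite set, so convergence = eventual equality *)
Definition accum_point (Np v Ntil : nat) (xs : nat -> nat -> R)
  (Zs : nat -> nat -> nat -> R) (Gs : nat -> nat -> nat)
  (xst : nat -> R) (Zst : nat -> nat -> R) (Gst : nat -> nat) : Prop :=
  exists phi : nat -> nat,
    (forall k, (phi k < phi (S k))%nat) /\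
    vec_cv Np (fun k => xs (phi k)) xst /\
    (forall j r, (j < Ntil)%nat -> (r < v)%nat ->
        Un_cv (fun k => Zs (phi k) j r) (Zst j r)) /\
    (exists k0, forall k, (k0 <= k)%nat -> forall j, (j < Ntil)%nat ->
        Gs (phi k) j = Gst j).

Definition nonsingular (v : nat) (M : nat -> nat -> R) : Prop :=
  exists W : nat -> nat -> R,
    forall r col, (r < v)%nat -> (col < v)%nat ->
      sumR v (fun m => W r m * M m col) = (if Nat.eqb r col then 1 else 0) /\
      sumR v (fun m => M r m * W m col) = (if Nat.eqb r col then 1 else 0).

From Stdlib Require Import Reals Lra Lia FunctionalExtensionality.
From Coquelicot Require Import Coquelicot.
Open Scope R_scope.

(* The image update minimizes a majorizer of G that is exact at the current iterate, and the
   regularizer is strongly convex in x uniformly in the codes and classes (the transforms are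
   nonsingular and the patches cover every voxel).  Comparing the majorizer at x^(n+1) and at the
   midpoint of x^n and x^(n+1) yields the sufficient decrease
   G^(n+1) + kappa ||x^(n+1) - x^n||^2 <= G^n; since G is bounded below on the box, the objective
   converges and the steps vanish.  Hard thresholding makes every code entry either 0 or at least
   gc in magnitude, so the codes are bounded and their supports are eventually constant along a
   convergent subsequence; this makes G continuous along it, and passing to the limit in the
   optimality of both updates gives the value of G and the partial optimality at accumulation
   points.  The zero subgradient comes from the surrogate agreeing with the data term to first
   order at the limit. *)

Lemma sumR_ext n f g : (forall i, (i < n)%nat -> f i = g i) -> sumR n f = sumR n g.
Proof.
  induction n as [|n IH]; simpl; intros H; auto.
  rewrite IH, H; auto; intros; apply H; lia.
Qed.

Lemma sumR_add n f g : sumR n (fun i => f i + g i) = sumR n f + sumR n g.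
Proof. induction n as [|n IH]; simpl; [ring | rewrite IH; ring]. Qed.

Lemma sumR_sub n f g : sumR n (fun i => f i - g i) = sumR n f - sumR n g.
Proof. induction n as [|n IH]; simpl; [ring | rewrite IH; ring]. Qed.

Lemma sumR_mull n a f : sumR n (fun i => a * f i) = a * sumR n f.
Proof. induction n as [|n IH]; simpl; [ring | rewrite IH; ring]. Qed.

Lemma sumR_zero n : sumR n (fun _ => 0) = 0.
Proof. induction n as [|n IH]; simpl; [ring | rewrite IH; ring]. Qed.

Lemma sumR_le n f g : (forall i, (i < n)%nat -> f i <= g i) -> sumR n f <= sumR n g.
Proof.
  induction n as [|n IH]; simpl; intros H; [lra|].
  pose proof (H n ltac:(lia)).
  enough (sumR n f <= sumR n g) by lra.
  apply IH; intros; apply H; lia.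
Qed.

Lemma sumR_ge0 n f : (forall i, (i < n)%nat -> 0 <= f i) -> 0 <= sumR n f.
Proof. intros H. rewrite <- (sumR_zero n). now apply sumR_le. Qed.

Lemma sumR_term_le n f k :
  (forall i, (i < n)%nat -> 0 <= f i) -> (k < n)%nat -> f k <= sumR n f.
Proof.
  induction n as [|n IH]; simpl; intros H Hk; [lia|].
  destruct (Nat.eq_dec k n) as [->|Hne].
  - assert (0 <= sumR n f) by (apply sumR_ge0; intros; apply H; lia). lra.
  - pose proof (H n ltac:(lia)).
    assert (f k <= sumR n f) by (apply IH; [intros; apply H|]; lia). lra.
Qed.

Lemma Rabs_sumR_le n f : Rabs (sumR n f) <= sumR n (fun i => Rabs (f i)).
Proof.
  induction n as [|n IH]; simpl; [rewrite Rabs_R0; lra|].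
  eapply Rle_trans; [apply Rabs_triang | lra].
Qed.

Lemma sumR_comm n m (f : nat -> nat -> R) :
  sumR n (fun i => sumR m (fun j => f i j)) = sumR m (fun j => sumR n (fun i => f i j)).
Proof.
  induction n as [|n IH]; simpl; [now rewrite sumR_zero|].
  now rewrite IH, <- sumR_add.
Qed.

Lemma sumR_kronecker n q (f : nat -> R) :
  (q < n)%nat -> sumR n (fun p => if Nat.eqb q p then f p else 0) = f q.
Proof.
  induction n as [|n IH]; simpl; intros Hq; [lia|].
  destruct (Nat.eq_dec q n) as [->|Hne].
  - rewrite Nat.eqb_refl, (sumR_ext n _ (fun _ => 0)), sumR_zero; [ring|].
    intros i Hi. destruct (Nat.eqb_spec n i); [lia | auto].
  - rewrite IH by lia. destruct (Nat.eqb_spec q n); [lia | ring].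
Qed.

Lemma sumR_sub_single n f g k : (k < n)%nat ->
  (forall i, (i < n)%nat -> i <> k -> f i = g i) -> sumR n f - sumR n g = f k - g k.
Proof.
  induction n as [|n IH]; simpl; intros Hk H; [lia|].
  destruct (Nat.eq_dec k n) as [->|Hne].
  - rewrite (sumR_ext n f g) by (intros; apply H; lia). ring.
  - rewrite (H n) by lia.
    assert (sumR n f - sumR n g = f k - g k) by (apply IH; [|intros; apply H]; lia).
    lra.
Qed.

Lemma Un_cv_const a : Un_cv (fun _ => a) a.
Proof.
  intros e He. exists 0%nat. intros. unfold Rdist.
  now rewrite Rminus_diag, Rabs_R0.
Qed.

Lemma Un_cv_eventually_eq u w l :
  Un_cv u l -> (exists N, forall n, (N <= n)%nat -> u n = w n) -> Un_cv w l.
Proof.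
  intros Hu [N HN] e He. destruct (Hu e He) as [M HM].
  exists (max N M). intros n Hn. rewrite <- HN by lia. apply HM; lia.
Qed.

Lemma Un_cv_ext u w l : (forall n, u n = w n) -> Un_cv u l -> Un_cv w l.
Proof. intros H Hu. apply (Un_cv_eventually_eq u); auto. exists 0%nat; auto. Qed.

Lemma Un_cv_scal a u l : Un_cv u l -> Un_cv (fun k => a * u k) (a * l).
Proof. intros H. apply CV_mult; auto using Un_cv_const. Qed.

Lemma Un_cv_sqr u l : Un_cv u l -> Un_cv (fun k => u k ^ 2) (l ^ 2).
Proof.
  intros H. apply (Un_cv_ext (fun k => u k * u k)); [intros; ring|].
  replace (l ^ 2) with (l * l) by ring. now apply CV_mult.
Qed.

Lemma Un_cv_sumR n (f : nat -> nat -> R) L :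
  (forall i, (i < n)%nat -> Un_cv (fun k => f k i) (L i)) ->
  Un_cv (fun k => sumR n (f k)) (sumR n L).
Proof.
  induction n as [|n IH]; simpl; intros H; [apply Un_cv_const|].
  apply CV_plus; [apply IH; intros|]; apply H; lia.
Qed.

Lemma Un_cv_le u w a b : Un_cv u a -> Un_cv w b ->
  (exists N, forall n, (N <= n)%nat -> u n <= w n) -> a <= b.
Proof.
  intros Hu Hw [N HN]. destruct (Rle_or_lt a b) as [|Hlt]; auto. exfalso.
  destruct (Hu ((a - b) / 2) ltac:(lra)) as [M1 H1].
  destruct (Hw ((a - b) / 2) ltac:(lra)) as [M2 H2].
  set (n := max N (max M1 M2)).
  specialize (H1 n ltac:(lia)). specialize (H2 n ltac:(lia)). specialize (HN n ltac:(lia)).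
  unfold Rdist in *. apply Rabs_def2 in H1. apply Rabs_def2 in H2. lra.
Qed.

Lemma strictly_increasing_ge (phi : nat -> nat) :
  (forall k, (phi k < phi (S k))%nat) -> forall k, (k <= phi k)%nat.
Proof. intros Hphi k. induction k; [lia | specialize (Hphi k); lia]. Qed.

Lemma Un_cv_subseq u l (phi : nat -> nat) :
  Un_cv u l -> (forall k, (phi k < phi (S k))%nat) -> Un_cv (fun k => u (phi k)) l.
Proof.
  intros Hu Hphi e He. destruct (Hu e He) as [N HN]. exists N. intros n Hn.
  apply HN. pose proof (strictly_increasing_ge phi Hphi n). lia.
Qed.

Lemma Un_cv_squeeze0 u w : Un_cv w 0 -> (forall k, Rabs (u k) <= w k) -> Un_cv u 0.
Proof.
  intros Hw H e He. destruct (Hw e He) as [N HN]. exists N. intros n Hn.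
  specialize (HN n Hn). unfold Rdist in *. rewrite Rminus_0_r in *.
  pose proof (H n). pose proof (Rle_abs (w n)). lra.
Qed.

Lemma Un_cv_limit1_in f D l x0 u :
  limit1_in f D l x0 -> Un_cv u x0 -> (forall n, D (u n)) -> Un_cv (fun n => f (u n)) l.
Proof.
  intros Hf Hu HD e He. destruct (Hf e He) as [a [Ha H]]. destruct (Hu a Ha) as [N HN].
  exists N. intros n Hn. apply (H (u n)). split; auto.
Qed.

Lemma small_enough_forall n (P : nat -> R -> Prop) :
  (forall i, (i < n)%nat -> exists d, 0 < d /\ forall d', 0 < d' -> d' <= d -> P i d') ->
  exists d, 0 < d /\ forall d', 0 < d' -> d' <= d -> forall i, (i < n)%nat -> P i d'.
Proof.
  induction n as [|n IH]; intros H.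
  - exists 1. split; [lra | intros; lia].
  - destruct IH as [d1 [Hd1 H1]]; [intros; apply H; lia|].
    destruct (H n ltac:(lia)) as [d2 [Hd2 H2]].
    exists (Rmin d1 d2). split; [now apply Rmin_pos|].
    intros d' Hd' Hle i Hi. pose proof (Rmin_l d1 d2). pose proof (Rmin_r d1 d2).
    destruct (Nat.eq_dec i n) as [->|]; [apply H2 | apply H1]; lra || lia.
Qed.

Lemma dotn_ge0 n u : 0 <= dotn n u u.
Proof. apply sumR_ge0. intros. nra. Qed.

Lemma norm2_ge0 n u : 0 <= norm2 n u.
Proof. apply sqrt_pos. Qed.

Lemma dotn_vsub_comm n a b : dotn n (vsub a b) (vsub a b) = dotn n (vsub b a) (vsub b a).
Proof. apply sumR_ext. intros. unfold vsub. ring. Qed.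

Lemma Rabs_coord_le_norm2 n u i : (i < n)%nat -> Rabs (u i) <= norm2 n u.
Proof.
  intros Hi. unfold norm2. rewrite <- sqrt_Rsqr_abs. apply sqrt_le_1_alt.
  apply (sumR_term_le n (fun i => u i * u i)); auto. intros. nra.
Qed.

Lemma Rabs_sumR_mul_le n a u :
  Rabs (sumR n (fun i => a i * u i)) <= sumR n (fun i => Rabs (a i)) * norm2 n u.
Proof.
  eapply Rle_trans; [apply Rabs_sumR_le|].
  rewrite Rmult_comm, <- sumR_mull. apply sumR_le. intros i Hi.
  rewrite Rabs_mult. pose proof (Rabs_coord_le_norm2 n u i Hi). pose proof (Rabs_pos (a i)). nra.
Qed.

Lemma inX_Un_cv Np xmax xk x :
  vec_cv Np xk x -> (forall k, inX Np xmax (xk k)) -> inX Np xmax x.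
Proof.
  intros Hx Hk p Hp. split.
  - apply (Un_cv_le (fun _ => 0) (fun k => xk k p)); auto using Un_cv_const.
    exists 0%nat. intros k _. apply Hk; auto.
  - apply (Un_cv_le (fun k => xk k p) (fun _ => xmax)); auto using Un_cv_const.
    exists 0%nat. intros k _. apply Hk; auto.
Qed.

Lemma allb_spec n P : allb n P = true <-> forall i, (i < n)%nat -> P i = true.
Proof.
  induction n as [|n IH]; simpl; split; intros H.
  - intros; lia.
  - auto.
  - apply andb_prop in H as [H1 H2]. intros i Hi.
    destruct (Nat.eq_dec i n) as [->|]; auto. apply IH; auto; lia.
  - rewrite (proj2 IH), H; auto; intros; apply H; lia.
Qed.

Lemma inXb_spec Np xmax x : inXb Np xmax x = true <-> inX Np xmax x.
Proof.
  unfold inXb, inX. rewrite allb_spec.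
  split; intros H p Hp; specialize (H p Hp);
    destruct (Rle_dec 0 (x p)), (Rle_dec (x p) xmax); simpl in *; auto; try discriminate; lra.
Qed.

Lemma sumR_add_sub_double n f g h :
  sumR n f + sumR n g - 2 * sumR n h = sumR n (fun i => f i + g i - 2 * h i).
Proof. induction n as [|n IH]; simpl; [ring | rewrite <- IH; ring]. Qed.

Lemma sumR_mul_midpoint n (a x y : nat -> R) :
  sumR n (fun i => a i * ((x i + y i) / 2))
  = (sumR n (fun i => a i * x i) + sumR n (fun i => a i * y i)) / 2.
Proof. induction n as [|n IH]; simpl; [field | rewrite IH; field]. Qed.

Lemma sumR_mul_sub n (a x y : nat -> R) :
  sumR n (fun i => a i * (x i - y i))
  = sumR n (fun i => a i * x i) - sumR n (fun i => a i * y i).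
Proof. rewrite <- sumR_sub. apply sumR_ext. intros. ring. Qed.

Definition nonzero_ind (z : R) : R := if Req_EM_T z 0 then 0 else 1.

Lemma hard_threshold_optimal a z gc : 0 < gc ->
  (forall w, (a - z) ^ 2 + gc ^ 2 * nonzero_ind z <= (a - w) ^ 2 + gc ^ 2 * nonzero_ind w) ->
  z = 0 \/ (z = a /\ gc <= Rabs a).
Proof.
  intros Hgc H. unfold nonzero_ind in H.
  destruct (Req_EM_T z 0) as [Hz|Hz]; [now left | right].
  assert (Hza : z = a).
  { specialize (H a). destruct (Req_EM_T a 0); nra. }
  split; auto.
  specialize (H 0). destruct (Req_EM_T 0 0) as [_|]; [|lra]. subst z.
  rewrite <- (Rabs_pos_eq gc) by lra. apply Rsqr_le_abs_0. unfold Rsqr. nra.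
Qed.

Lemma hi_derivable I0 sigma2 Y s1 s2 i l : 0 < I0 -> 0 <= sigma2 ->
  derivable_pt_lim (hi I0 sigma2 Y s1 s2 i) l (hdot I0 sigma2 Y s1 s2 i l).
Proof.
  intros HI Hs. apply is_derive_Reals. unfold hi, hdot, gi, fi.
  assert (E : exp (- (s1 i * l + s2 i * (l * (l * 1)))) = exp (- (s1 i * l + s2 i * l ^ 2)))
    by (f_equal; ring).
  pose proof (exp_pos (- (s1 i * l + s2 i * l ^ 2))).
  auto_derive; rewrite E; [nra | field; nra].
Qed.

Lemma ex_derive_continuity_pt f x : ex_derive f x -> continuity_pt f x.
Proof.
  intros [d Hd]. apply derivable_continuous_pt. exists d. now apply is_derive_Reals.
Qed.

Lemma hi_continuous I0 sigma2 Y s1 s2 i l : 0 < I0 -> 0 <= sigma2 ->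
  continuity_pt (hi I0 sigma2 Y s1 s2 i) l.
Proof.
  intros. apply ex_derive_continuity_pt. eexists. apply is_derive_Reals.
  now apply hi_derivable.
Qed.

Lemma hdot_continuous I0 sigma2 Y s1 s2 i l : 0 < I0 -> 0 <= sigma2 ->
  continuity_pt (hdot I0 sigma2 Y s1 s2 i) l.
Proof.
  intros HI Hs. apply ex_derive_continuity_pt. unfold hdot, gi, fi.
  assert (E : exp (- (s1 i * l + s2 i * (l * (l * 1)))) = exp (- (s1 i * l + s2 i * l ^ 2)))
    by (f_equal; ring).
  pose proof (exp_pos (- (s1 i * l + s2 i * l ^ 2))).
  auto_derive. rewrite E. nra.
Qed.

Lemma derivable_quadratic_gap f f' C lb : derivable_pt_lim f lb f' ->
  forall eps, 0 < eps -> exists d, 0 < d /\ forall D, Rabs D < d ->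
    f lb + f' * D + C * D ^ 2 - f (lb + D) <= eps * Rabs D.
Proof.
  intros Hf eps Heps.
  destruct (Hf (eps / 2) ltac:(lra)) as [del Hdel].
  pose proof (Rabs_pos C) as HC.
  set (d2 := eps / (2 * (Rabs C + 1))).
  assert (Hd2 : 0 < d2) by (apply Rdiv_lt_0_compat; lra).
  exists (Rmin del d2). split; [apply Rmin_pos; [apply cond_pos | lra]|].
  intros D HD. pose proof (Rmin_l del d2). pose proof (Rmin_r del d2).
  destruct (Req_EM_T D 0) as [->|HD0].
  - rewrite Rplus_0_r, Rabs_R0. lra.
  - assert (Hlin : f lb + f' * D - f (lb + D) <= eps / 2 * Rabs D).
    { specialize (Hdel D HD0 ltac:(lra)).
      set (q := (f (lb + D) - f lb) / D - f') in Hdel.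
      replace (f lb + f' * D - f (lb + D)) with (- (q * D)) by (unfold q; field; auto).
      pose proof (Rle_abs (- (q * D))) as Hq.
      rewrite Rabs_Ropp, Rabs_mult in Hq.
      pose proof (Rabs_pos D). nra. }
    assert (Hquad : C * D ^ 2 <= eps / 2 * Rabs D).
    { pose proof (Rabs_pos D).
      assert (C * D ^ 2 <= Rabs C * Rabs D * Rabs D).
      { rewrite <- Rabs_mult, <- Rabs_mult. eapply Rle_trans; [apply Rle_abs|].
        right. f_equal. ring. }
      assert (Rabs C * Rabs D <= Rabs C * d2) by (apply Rmult_le_compat_l; lra).
      assert (Rabs C * d2 <= eps / 2).
      { unfold d2. replace (Rabs C * (eps / (2 * (Rabs C + 1))))
          with (eps / 2 * (Rabs C / (Rabs C + 1))) by (field; lra).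
        assert (Rabs C / (Rabs C + 1) <= 1)
          by (apply (Rmult_le_reg_l (Rabs C + 1)); [lra | field_simplify; lra]).
        nra. }
      nra. }
    lra.
Qed.

Lemma left_inverse_apply v (M W : nat -> nat -> R) :
  (forall r col, (r < v)%nat -> (col < v)%nat ->
     sumR v (fun m => W r m * M m col) = if Nat.eqb r col then 1 else 0) ->
  forall w r, (r < v)%nat ->
    w r = sumR v (fun m => W r m * sumR v (fun col => M m col * w col)).
Proof.
  intros HW w r Hr.
  rewrite <- (sumR_kronecker v r w Hr).
  transitivity (sumR v (fun col => sumR v (fun m => W r m * (M m col * w col)))).
  - apply sumR_ext. intros col Hcol.
    rewrite (sumR_ext v _ (fun m => w col * (W r m * M m col))) by (intros; ring).
    rewrite sumR_mull, HW by auto. destruct (Nat.eqb r col); ring.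
  - rewrite <- sumR_comm. apply sumR_ext. intros m Hm. now rewrite <- sumR_mull.
Qed.

Lemma nonsingular_coercive v M : nonsingular v M ->
  exists e, 0 < e /\ forall w,
    e * sumR v (fun r => w r ^ 2)
      <= sumR v (fun r => sumR v (fun col => M r col * w col) ^ 2).
Proof.
  intros [W HW].
  set (a := fun r => sumR v (fun m => Rabs (W r m))).
  set (C := sumR v (fun r => a r ^ 2)).
  assert (HC : 0 <= C) by (apply sumR_ge0; intros; apply pow2_ge_0).
  exists (/ (C + 1)). split; [apply Rinv_0_lt_compat; lra|]. intros w.
  set (u := fun m => sumR v (fun col => M m col * w col)).
  assert (Hu : dotn v u u = sumR v (fun r => u r ^ 2))
    by (apply sumR_ext; intros; ring).
  assert (Hcoord : forall r, (r < v)%nat -> w r ^ 2 <= a r ^ 2 * dotn v u u).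
  { intros r Hr.
    rewrite (left_inverse_apply v M W (fun r col Hr Hc => proj1 (HW r col Hr Hc)) w r Hr).
    change (sumR v (fun m => W r m * sumR v (fun col => M m col * w col)))
      with (sumR v (fun m => W r m * u m)).
    pose proof (Rabs_sumR_mul_le v (W r) u) as Hb. fold (a r) in Hb.
    pose proof (norm2_ge0 v u). pose proof (Rabs_pos (sumR v (fun m => W r m * u m))).
    assert (Hn : norm2 v u * norm2 v u = dotn v u u) by (apply sqrt_sqrt, dotn_ge0).
    rewrite <- Rsqr_pow2, Rsqr_abs. unfold Rsqr.
    assert (Rabs (sumR v (fun m => W r m * u m)) * Rabs (sumR v (fun m => W r m * u m))
              <= (a r * norm2 v u) * (a r * norm2 v u)) by (apply Rmult_le_compat; auto).
    nra. }
  assert (Hsum : sumR v (fun r => w r ^ 2) <= C * dotn v u u).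
  { unfold C. rewrite Rmult_comm, <- sumR_mull. apply sumR_le. intros r Hr.
    rewrite Rmult_comm. auto. }
  change (sumR v (fun r => sumR v (fun col => M r col * w col) ^ 2))
    with (sumR v (fun r => u r ^ 2)).
  rewrite <- Hu.
  assert (/ (C + 1) * C <= 1).
  { apply (Rmult_le_reg_l (C + 1)); [lra|]. rewrite <- Rmult_assoc, Rinv_r by lra. lra. }
  pose proof (dotn_ge0 v u). pose proof (Rinv_0_lt_compat (C + 1) ltac:(lra)).
  apply Rle_trans with (/ (C + 1) * (C * dotn v u u)); [apply Rmult_le_compat_l; lra | nra].
Qed.

Lemma dotn_le_patches Np Ntil v (patch : nat -> nat -> nat) (d : nat -> R) :
  (forall j r, (j < Ntil)%nat -> (r < v)%nat -> (patch j r < Np)%nat) ->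
  (forall p, (p < Np)%nat -> exists j r, (j < Ntil)%nat /\ (r < v)%nat /\ patch j r = p) ->
  dotn Np d d <= sumR Ntil (fun j => sumR v (fun r => d (patch j r) ^ 2)).
Proof.
  intros Hpatch Hcover.
  set (hit := fun j r p => if Nat.eqb (patch j r) p then d p * d p else 0).
  assert (Hhit : forall j r p, 0 <= hit j r p)
    by (intros; unfold hit; destruct Nat.eqb; nra).
  apply Rle_trans with (sumR Np (fun p => sumR Ntil (fun j => sumR v (fun r => hit j r p)))).
  - apply sumR_le. intros p Hp. destruct (Hcover p Hp) as [j0 [r0 [Hj0 [Hr0 He]]]].
    eapply Rle_trans; [|apply (sumR_term_le Ntil _ j0)]; auto.
    2:{ intros; apply sumR_ge0; auto. }
    eapply Rle_trans; [|apply (sumR_term_le v _ r0)]; auto.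
    unfold hit. rewrite He, Nat.eqb_refl. lra.
  - rewrite sumR_comm. apply Req_le, sumR_ext. intros j Hj.
    rewrite sumR_comm. apply sumR_ext. intros r Hr.
    unfold hit. rewrite (sumR_kronecker Np (patch j r) (fun p => d p * d p)); auto. ring.
Qed.

Section SPULTRA.

Variables (Nd Np v Ntil K : nat) (A : nat -> nat -> R)
  (I0 sigma2 xmax beta gc : R) (Y s1 s2 tau : nat -> R)
  (patch : nat -> nat -> nat) (Om : nat -> nat -> nat -> R)
  (c : nat -> R -> R)
  (xs : nat -> nat -> R) (Zs : nat -> nat -> nat -> R) (Gs : nat -> nat -> nat).

Hypotheses
  (HA : forall i p, (i < Nd)%nat -> (p < Np)%nat -> 0 <= A i p)
  (HI0 : 0 < I0) (Hsigma : 0 <= sigma2) (Hxmax : 0 < xmax)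
  (Hpatch : forall j r, (j < Ntil)%nat -> (r < v)%nat -> (patch j r < Np)%nat)
  (Hcover : forall p, (p < Np)%nat ->
      exists j r, (j < Ntil)%nat /\ (r < v)%nat /\ patch j r = p)
  (HOm : forall k, (k < K)%nat -> nonsingular v (Om k))
  (Htau : forall j, (j < Ntil)%nat -> 0 < tau j)
  (Hbeta : 0 < beta) (Hgc : 0 < gc)
  (Hcpos : forall i l, (i < Nd)%nat -> 0 <= l -> 0 < c i l)
  (Hccont : forall i l, (i < Nd)%nat -> 0 <= l ->
      limit1_in (c i) (fun t => 0 <= t) (c i l) l)
  (Hcmaj : forall i l lbar, (i < Nd)%nat -> 0 <= l -> 0 <= lbar ->
      hi I0 sigma2 Y s1 s2 i l <= qi I0 sigma2 Y s1 s2 c i l lbar)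
  (Hx0 : inX Np xmax (xs 0%nat))
  (HG0 : forall j, (j < Ntil)%nat -> (Gs 0%nat j < K)%nat)
  (Himg : forall n x,
      ER_le (Fmaj Nd Np v Ntil A I0 sigma2 Y s1 s2 c xmax Om patch tau beta gc
               (xs (S n)) (Zs n) (Gs n) (xs n))
            (Fmaj Nd Np v Ntil A I0 sigma2 Y s1 s2 c xmax Om patch tau beta gc
               x (Zs n) (Gs n) (xs n)))
  (HZG_feas : forall n j, (j < Ntil)%nat -> (Gs (S n) j < K)%nat)
  (HZG : forall n Z Gm, (forall j, (j < Ntil)%nat -> (Gm j < K)%nat) ->
      Reg v Ntil Om patch tau beta gc (xs (S n)) (Zs (S n)) (Gs (S n))
      <= Reg v Ntil Om patch tau beta gc (xs (S n)) Z Gm).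

Let inB := inX Np xmax.
Let l := proj_l Np A.
Let Lf := Lfid Nd Np A I0 sigma2 Y s1 s2.
Let Rg := Reg v Ntil Om patch tau beta gc.
Let GG := Gobj Nd Np v Ntil A I0 sigma2 Y s1 s2 xmax Om patch tau beta gc.

Definition admissible (Gm : nat -> nat) : Prop := forall j, (j < Ntil)%nat -> (Gm j < K)%nat.

Definition surrogate (xbar x : nat -> R) : R :=
  sumR Nd (fun i => qi I0 sigma2 Y s1 s2 c i (l x i) (l xbar i)).

Definition objective (n : nat) : R := Lf (xs n) + Rg (xs n) (Zs n) (Gs n).

Definition midpoint (a b : nat -> R) : nat -> R := fun p => (a p + b p) / 2.

Lemma Gobj_inX x Z Gm : inB x -> GG x Z Gm = Fin (Lf x + Rg x Z Gm).
Proof. intros Hx. unfold GG, Gobj. now rewrite (proj2 (inXb_spec _ _ _) Hx). Qed.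

Lemma image_update_optimal n y : inB y ->
  inB (xs (S n)) /\
  surrogate (xs n) (xs (S n)) + Rg (xs (S n)) (Zs n) (Gs n)
    <= surrogate (xs n) y + Rg y (Zs n) (Gs n).
Proof.
  intros Hy. specialize (Himg n y). unfold Fmaj in Himg.
  rewrite (proj2 (inXb_spec _ _ _) Hy) in Himg.
  destruct (inXb Np xmax (xs (S n))) eqn:E; [|contradiction].
  split; [now apply inXb_spec | exact Himg].
Qed.

Lemma iterate_inX n : inB (xs n).
Proof. destruct n; [exact Hx0 | exact (proj1 (image_update_optimal n _ Hx0))]. Qed.

Lemma iterate_admissible n : admissible (Gs n).
Proof. destruct n; [exact HG0 | exact (HZG_feas n)]. Qed.

Lemma proj_l_ge0 x i : inB x -> (i < Nd)%nat -> 0 <= l x i.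
Proof.
  intros Hx Hi. apply sumR_ge0. intros p Hp.
  specialize (Hx p Hp). specialize (HA i p Hi Hp). nra.
Qed.

Lemma proj_l_le x i : inB x -> (i < Nd)%nat -> l x i <= sumR Np (fun p => A i p * xmax).
Proof.
  intros Hx Hi. apply sumR_le. intros p Hp.
  specialize (Hx p Hp). specialize (HA i p Hi Hp). nra.
Qed.

Lemma proj_l_midpoint a b i : l (midpoint a b) i = (l a i + l b i) / 2.
Proof. apply sumR_mul_midpoint. Qed.

Lemma Rabs_proj_l_sub y x i :
  Rabs (l y i - l x i) <= sumR Np (fun p => Rabs (A i p)) * norm2 Np (vsub y x).
Proof. unfold l, proj_l. rewrite <- sumR_mul_sub. apply Rabs_sumR_mul_le. Qed.

Lemma proj_l_Un_cv (xk : nat -> nat -> R) x i :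
  vec_cv Np xk x -> Un_cv (fun k => l (xk k) i) (l x i).
Proof.
  intros H. apply (Un_cv_sumR Np (fun k p => A i p * xk k p)).
  intros p Hp. apply Un_cv_scal, H; auto.
Qed.

Lemma Reg_ge0 x Z Gm : 0 <= Rg x Z Gm.
Proof.
  apply Rmult_le_pos; [lra|]. apply sumR_ge0. intros j Hj.
  apply Rmult_le_pos; [pose proof (Htau j Hj); lra|].
  apply Rplus_le_le_0_compat.
  - apply sumR_ge0. intros. apply pow2_ge_0.
  - apply Rmult_le_pos; [apply pow2_ge_0|].
    apply sumR_ge0. intros. destruct Req_EM_T; lra.
Qed.

Lemma Lf_bounded_below : exists B, forall x, inB x -> B <= Lf x.
Proof.
  assert (Hh : forall i, (i < Nd)%nat -> exists B, forall x, inB x ->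
             B <= hi I0 sigma2 Y s1 s2 i (l x i)).
  { intros i Hi.
    assert (0 <= sumR Np (fun p => A i p * xmax)).
    { apply (Rle_trans _ (l (xs 0%nat) i)); [apply proj_l_ge0 | apply proj_l_le]; auto. }
    destruct (continuity_ab_min (hi I0 sigma2 Y s1 s2 i) 0 (sumR Np (fun p => A i p * xmax)))
      as [m Hm]; auto.
    { intros; now apply hi_continuous. }
    exists (hi I0 sigma2 Y s1 s2 i m). intros x Hx. apply Hm.
    split; [apply proj_l_ge0 | apply proj_l_le]; auto. }
  assert (H : forall n, (n <= Nd)%nat -> exists B, forall x, inB x ->
            B <= sumR n (fun i => hi I0 sigma2 Y s1 s2 i (l x i))).
  { induction n as [|n IH]; intros Hn; [exists 0; intros; simpl; lra|].
    destruct IH as [B1 H1]; [lia|]. destruct (Hh n) as [B2 H2]; [lia|].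
    exists (B1 + B2). intros x Hx. simpl.
    specialize (H1 x Hx). specialize (H2 x Hx). lra. }
  exact (H Nd (le_n _)).
Qed.

Lemma midpoint_inX a b : inB a -> inB b -> inB (midpoint a b).
Proof. intros Ha Hb p Hp. specialize (Ha p Hp). specialize (Hb p Hp). unfold midpoint. lra. Qed.

Lemma Reg_midpoint x y Z Gm :
  Rg x Z Gm + Rg y Z Gm - 2 * Rg (midpoint x y) Z Gm =
  beta * sumR Ntil (fun j => tau j * (/ 2 * sumR v (fun r =>
     sumR v (fun col => Om (Gm j) r col * (x (patch j col) - y (patch j col))) ^ 2))).
Proof.
  unfold Rg, Reg.
  match goal with |- beta * ?S1 + beta * ?S2 - 2 * (beta * ?S3) = _ =>
    transitivity (beta * (S1 + S2 - 2 * S3)); [ring|] end.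
  rewrite sumR_add_sub_double. f_equal. apply sumR_ext. intros j Hj. unfold patch_res.
  match goal with |- tau j * (?P1 + _) + tau j * (?P2 + _) - 2 * (tau j * (?P3 + _)) = _ =>
    transitivity (tau j * (P1 + P2 - 2 * P3)); [ring|] end.
  rewrite sumR_add_sub_double. f_equal. rewrite <- sumR_mull. apply sumR_ext. intros r Hr.
  unfold midpoint. rewrite sumR_mul_midpoint, sumR_mul_sub. field.
Qed.

Lemma tau_bounded_below : exists t, 0 < t /\ forall j, (j < Ntil)%nat -> t <= tau j.
Proof.
  destruct (small_enough_forall Ntil (fun j d => d <= tau j)) as [d [Hd H]].
  - intros j Hj. exists (tau j). split; [now apply Htau | intros; lra].
  - exists d. split; auto. intros j Hj. apply H; auto; lra.
Qed.

Lemma transforms_uniformly_coercive : exists e, 0 < e /\ forall k, (k < K)%nat -> forall w,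
  e * sumR v (fun r => w r ^ 2) <= sumR v (fun r => sumR v (fun col => Om k r col * w col) ^ 2).
Proof.
  destruct (small_enough_forall K (fun k e => forall w, e * sumR v (fun r => w r ^ 2)
              <= sumR v (fun r => sumR v (fun col => Om k r col * w col) ^ 2))) as [d [Hd H]].
  - intros k Hk. destruct (nonsingular_coercive v (Om k) (HOm k Hk)) as [e [He Hcoer]].
    exists e. split; auto. intros d' Hd' Hle w.
    assert (0 <= sumR v (fun r => w r ^ 2)) by (apply sumR_ge0; intros; apply pow2_ge_0).
    specialize (Hcoer w). nra.
  - exists d. split; auto. intros k Hk. apply H; auto; lra.
Qed.

(* Strong convexity in [x], uniform in the codes and the classes, is where the nonsingularity
   of the transforms and the covering of every voxel by a patch are used. *)
Lemma Reg_midpoint_strongly_convex : exists kappa, 0 < kappa /\ forall x y Z Gm,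
  admissible Gm ->
  kappa * dotn Np (vsub x y) (vsub x y)
    <= Rg x Z Gm + Rg y Z Gm - 2 * Rg (midpoint x y) Z Gm.
Proof.
  destruct tau_bounded_below as [t [Ht Htj]].
  destruct transforms_uniformly_coercive as [e [He Hek]].
  exists (beta * (t * e / 2)). split; [apply Rmult_lt_0_compat; nra|].
  intros x y Z Gm HGm. rewrite Reg_midpoint, Rmult_assoc.
  apply Rmult_le_compat_l; [lra|]. set (d := vsub x y).
  apply Rle_trans with (t * e / 2 * sumR Ntil (fun j => sumR v (fun r => d (patch j r) ^ 2))).
  { apply Rmult_le_compat_l; [nra|]. now apply dotn_le_patches. }
  rewrite <- sumR_mull. apply sumR_le. intros j Hj.
  specialize (Hek (Gm j) (HGm j Hj) (fun col => d (patch j col))).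
  assert (0 <= sumR v (fun r => d (patch j r) ^ 2))
    by (apply sumR_ge0; intros; apply pow2_ge_0).
  specialize (Htj j Hj).
  assert (t * (e * sumR v (fun r => d (patch j r) ^ 2))
            <= tau j * sumR v (fun r => sumR v (fun col => Om (Gm j) r col * d (patch j col)) ^ 2))
    by (apply Rmult_le_compat; nra).
  unfold d, vsub in *. lra.
Qed.

Lemma surrogate_midpoint_convex xbar a b : inB xbar ->
  2 * surrogate xbar (midpoint a b) <= surrogate xbar a + surrogate xbar b.
Proof.
  intros Hxbar. unfold surrogate.
  enough (0 <= sumR Nd (fun i => qi I0 sigma2 Y s1 s2 c i (l a i) (l xbar i))
                + sumR Nd (fun i => qi I0 sigma2 Y s1 s2 c i (l b i) (l xbar i))
                - 2 * sumR Nd (fun i => qi I0 sigma2 Y s1 s2 c i (l (midpoint a b) i) (l xbar i)))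
    by lra.
  rewrite sumR_add_sub_double. apply sumR_ge0. intros i Hi.
  rewrite proj_l_midpoint. unfold qi.
  pose proof (Hcpos i (l xbar i) Hi (proj_l_ge0 xbar i Hxbar Hi)).
  match goal with |- 0 <= ?E =>
    replace E with (/ 4 * c i (l xbar i) * (l a i - l b i) ^ 2) by field end.
  apply Rmult_le_pos; [lra | apply pow2_ge_0].
Qed.

Lemma surrogate_diag x : surrogate x x = Lf x.
Proof. apply sumR_ext. intros. unfold qi, l. ring. Qed.

Lemma Lf_le_surrogate xbar x : inB xbar -> inB x -> Lf x <= surrogate xbar x.
Proof. intros. apply sumR_le. intros i Hi. apply Hcmaj; auto; now apply proj_l_ge0. Qed.

Lemma sufficient_decrease : exists kappa, 0 < kappa /\ forall n,
  objective (S n) + kappa * dotn Np (vsub (xs (S n)) (xs n)) (vsub (xs (S n)) (xs n))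
    <= objective n.
Proof.
  destruct Reg_midpoint_strongly_convex as [kappa [Hk Hconv]].
  exists kappa. split; auto. intros n.
  set (a := xs n). set (b := xs (S n)). set (m := midpoint a b).
  set (Phi := fun y => surrogate a y + Rg y (Zs n) (Gs n)).
  assert (Ha : inB a) by apply iterate_inX. assert (Hb : inB b) by apply iterate_inX.
  assert (Hbm : Phi b <= Phi m)
    by exact (proj2 (image_update_optimal n m (midpoint_inX a b Ha Hb))).
  assert (Hstrong : kappa * dotn Np (vsub a b) (vsub a b) <= Phi a + Phi b - 2 * Phi m).
  { pose proof (Hconv a b (Zs n) (Gs n) (iterate_admissible n)).
    pose proof (surrogate_midpoint_convex a a b Ha). unfold Phi, m. lra. }
  assert (Hstart : Phi a = objective n)
    by (unfold Phi, objective; now rewrite surrogate_diag).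
  assert (Hnext : objective (S n) <= Phi b).
  { pose proof (HZG n (Zs n) (Gs n) (iterate_admissible n)) as Hcode.
    pose proof (Lf_le_surrogate a b Ha Hb) as Hmaj.
    unfold objective, Phi, Rg. change (xs (S n)) with b in Hcode |- *. lra. }
  rewrite dotn_vsub_comm. fold a b. lra.
Qed.

Lemma objective_decreasing n : objective (S n) <= objective n.
Proof.
  destruct sufficient_decrease as [k [Hk H]]. specialize (H n).
  pose proof (dotn_ge0 Np (vsub (xs (S n)) (xs n))). nra.
Qed.

Lemma objective_Un_cv : exists Gstar, Un_cv objective Gstar.
Proof.
  destruct Lf_bounded_below as [B HB].
  destruct (decreasing_cv objective) as [Gstar HG].
  - intros n. apply objective_decreasing.
  - exists (- B). intros x [n ->]. unfold opp_seq.
    pose proof (HB (xs n) (iterate_inX n)). pose proof (Reg_ge0 (xs n) (Zs n) (Gs n)).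
    unfold objective. lra.
  - now exists Gstar.
Qed.

Lemma step_Un_cv : Un_cv (fun n => norm2 Np (vsub (xs (S n)) (xs n))) 0.
Proof.
  destruct sufficient_decrease as [k [Hk H]]. destruct objective_Un_cv as [G HG].
  intros e He.
  destruct (HG (k * (e * e) / 2)) as [N HN]; [pose proof (Rmult_lt_0_compat k (e * e) Hk ltac:(nra)); lra|].
  exists N. intros n Hn.
  pose proof (HN n Hn) as A1. pose proof (HN (S n) ltac:(lia)) as A2.
  unfold Rdist in *. apply Rabs_def2 in A1. apply Rabs_def2 in A2. specialize (H n).
  set (D := dotn Np (vsub (xs (S n)) (xs n)) (vsub (xs (S n)) (xs n))) in *.
  assert (HD : D < e * e) by (apply (Rmult_lt_reg_l k); auto; lra).
  assert (0 <= D) by apply dotn_ge0.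
  rewrite Rminus_0_r, Rabs_pos_eq by apply norm2_ge0. unfold norm2. fold D.
  rewrite <- (sqrt_square e) by lra. apply sqrt_lt_1_alt. lra.
Qed.

Definition patch_transform (x : nat -> R) (k j r : nat) : R :=
  sumR v (fun col => Om k r col * x (patch j col)).

Definition set_entry (Z : nat -> nat -> R) (j r : nat) (w : R) : nat -> nat -> R :=
  fun j' r' => if andb (Nat.eqb j' j) (Nat.eqb r' r) then w else Z j' r'.

Lemma Reg_set_entry x Z Gm j r w : (j < Ntil)%nat -> (r < v)%nat ->
  Rg x (set_entry Z j r w) Gm - Rg x Z Gm =
  beta * (tau j * (((patch_transform x (Gm j) j r - w) ^ 2 + gc ^ 2 * nonzero_ind w)
                   - ((patch_transform x (Gm j) j r - Z j r) ^ 2 + gc ^ 2 * nonzero_ind (Z j r)))).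
Proof.
  intros Hj Hr.
  assert (Hrow : forall j', j' <> j -> set_entry Z j r w j' = Z j').
  { intros j' Hne. apply functional_extensionality. intros r'. unfold set_entry.
    destruct (Nat.eqb_spec j' j); [lia | reflexivity]. }
  assert (Hentry : forall r', r' <> r -> set_entry Z j r w j r' = Z j r').
  { intros r' Hne. unfold set_entry. rewrite Nat.eqb_refl.
    destruct (Nat.eqb_spec r' r); [lia | reflexivity]. }
  assert (Hnew : set_entry Z j r w j r = w)
    by (unfold set_entry; now rewrite !Nat.eqb_refl).
  unfold Rg, Reg. rewrite <- Rmult_minus_distr_l. f_equal.
  rewrite (sumR_sub_single Ntil _ _ j Hj) by (intros j' _ Hne; now rewrite Hrow).
  unfold patch_res, l0.
  match goal with |- tau j * (?P1 + gc ^ 2 * ?N1) - tau j * (?P2 + gc ^ 2 * ?N2) = _ =>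
    transitivity (tau j * ((P1 - P2) + gc ^ 2 * (N1 - N2))); [ring|] end.
  rewrite !(sumR_sub_single v _ _ r Hr) by (intros r' _ Hne; now rewrite Hentry).
  rewrite Hnew. unfold patch_transform, nonzero_ind. ring.
Qed.

Lemma code_entry_hard_thresholded n j r : (j < Ntil)%nat -> (r < v)%nat ->
  let a := patch_transform (xs (S n)) (Gs (S n) j) j r in
  Zs (S n) j r = 0 \/ (Zs (S n) j r = a /\ gc <= Rabs a).
Proof.
  intros Hj Hr a. apply hard_threshold_optimal; auto. intros w.
  pose proof (HZG n (set_entry (Zs (S n)) j r w) (Gs (S n)) (HZG_feas n)) as Hopt.
  pose proof (Reg_set_entry (xs (S n)) (Zs (S n)) (Gs (S n)) j r w Hj Hr) as E.
  pose proof (Htau j Hj). unfold Rg in E. fold a in E.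
  set (X := (a - w) ^ 2 + gc ^ 2 * nonzero_ind w
            - ((a - Zs (S n) j r) ^ 2 + gc ^ 2 * nonzero_ind (Zs (S n) j r))) in E.
  enough (0 <= X) by (unfold X in *; lra).
  destruct (Rle_or_lt 0 X) as [|HX]; auto.
  assert (0 < beta * (tau j * - X)) by (apply Rmult_lt_0_compat; nra). nra.
Qed.

Lemma patch_transform_bound x k j r : inB x -> (k < K)%nat -> (j < Ntil)%nat -> (r < v)%nat ->
  Rabs (patch_transform x k j r)
    <= sumR K (fun k => sumR v (fun r => sumR v (fun col => Rabs (Om k r col) * xmax))).
Proof.
  intros Hx Hk Hj Hr.
  assert (Hnn : forall k r col, 0 <= Rabs (Om k r col) * xmax)
    by (intros; pose proof (Rabs_pos (Om k0 r0 col)); nra).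
  eapply Rle_trans; [apply Rabs_sumR_le|].
  apply Rle_trans with (sumR v (fun col => Rabs (Om k r col) * xmax)).
  { apply sumR_le. intros col Hc. rewrite Rabs_mult. apply Rmult_le_compat_l; [apply Rabs_pos|].
    specialize (Hx (patch j col) (Hpatch j col Hj Hc)). rewrite Rabs_pos_eq; lra. }
  eapply Rle_trans; [|apply (sumR_term_le K _ k)]; auto.
  - apply (sumR_term_le v (fun r => sumR v (fun col => Rabs (Om k r col) * xmax))); auto.
    intros. now apply sumR_ge0.
  - intros. apply sumR_ge0. intros. now apply sumR_ge0.
Qed.

Lemma iterates_bounded : exists M, forall n,
  (forall p, (p < Np)%nat -> Rabs (xs n p) <= M) /\
  (forall j r, (j < Ntil)%nat -> (r < v)%nat -> Rabs (Zs n j r) <= M) /\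
  (forall j, (j < Ntil)%nat -> INR (Gs n j) <= M).
Proof.
  set (MZ := sumR K (fun k => sumR v (fun r => sumR v (fun col => Rabs (Om k r col) * xmax)))).
  set (Z0 := sumR Ntil (fun j => sumR v (fun r => Rabs (Zs 0%nat j r)))).
  assert (HMZ : 0 <= MZ).
  { repeat (apply sumR_ge0; intros). pose proof (Rabs_pos (Om i i0 i1)). nra. }
  assert (HZ0 : 0 <= Z0) by (repeat (apply sumR_ge0; intros); apply Rabs_pos).
  pose proof (pos_INR K).
  exists (xmax + MZ + Z0 + INR K). intros n. split; [|split].
  - intros p Hp. pose proof (iterate_inX n p Hp). rewrite Rabs_pos_eq; lra.
  - intros j r Hj Hr. destruct n as [|n].
    + enough (Rabs (Zs 0%nat j r) <= Z0) by lra.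
      eapply Rle_trans; [|apply (sumR_term_le Ntil _ j)]; auto.
      * apply (sumR_term_le v (fun r => Rabs (Zs 0%nat j r))); auto. intros; apply Rabs_pos.
      * intros. apply sumR_ge0. intros. apply Rabs_pos.
    + destruct (code_entry_hard_thresholded n j r Hj Hr) as [-> | [-> _]];
        [rewrite Rabs_R0; lra|].
      pose proof (patch_transform_bound (xs (S n)) (Gs (S n) j) j r
                    (iterate_inX _) (HZG_feas n j Hj) Hj Hr) as Hb.
      fold MZ in Hb. lra.
  - intros j Hj. pose proof (lt_INR _ _ (iterate_admissible n j Hj)). lra.
Qed.

Lemma Lf_Un_cv xk x : vec_cv Np xk x -> Un_cv (fun k => Lf (xk k)) (Lf x).
Proof.
  intros H. apply (Un_cv_sumR Nd (fun k i => hi I0 sigma2 Y s1 s2 i (l (xk k) i))).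
  intros i Hi. apply (continuity_seq (hi I0 sigma2 Y s1 s2 i)).
  - now apply hi_continuous.
  - now apply proj_l_Un_cv.
Qed.

Lemma qi_Un_cv i lk mk l0 m : (i < Nd)%nat -> 0 <= m -> (forall k, 0 <= mk k) ->
  Un_cv lk l0 -> Un_cv mk m ->
  Un_cv (fun k => qi I0 sigma2 Y s1 s2 c i (lk k) (mk k)) (qi I0 sigma2 Y s1 s2 c i l0 m).
Proof.
  intros Hi Hm Hmk Hl Hmm.
  assert (Hcm : Un_cv (fun k => c i (mk k)) (c i m))
    by exact (Un_cv_limit1_in _ _ _ _ _ (Hccont i m Hi Hm) Hmm Hmk).
  apply CV_plus; [apply CV_plus|].
  - apply continuity_seq; auto. now apply hi_continuous.
  - apply CV_mult; [|now apply CV_minus]. apply continuity_seq; auto. now apply hdot_continuous.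
  - apply CV_mult; [now apply Un_cv_scal | apply Un_cv_sqr; now apply CV_minus].
Qed.

Lemma surrogate_Un_cv xbk xk xb x : vec_cv Np xbk xb -> vec_cv Np xk x ->
  (forall k, inB (xbk k)) -> inB xb ->
  Un_cv (fun k => surrogate (xbk k) (xk k)) (surrogate xb x).
Proof.
  intros Hxb Hx Hk Hb.
  apply (Un_cv_sumR Nd (fun k i => qi I0 sigma2 Y s1 s2 c i (l (xk k) i) (l (xbk k) i))).
  intros i Hi. apply qi_Un_cv; auto using proj_l_Un_cv, proj_l_ge0.
Qed.

(* The l0 term is discontinuous, hence the supports must eventually agree. *)
Lemma Reg_Un_cv xk x Zk Z Gk Gm :
  vec_cv Np xk x ->
  (forall j r, (j < Ntil)%nat -> (r < v)%nat -> Un_cv (fun k => Zk k j r) (Z j r)) ->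
  (forall j r, (j < Ntil)%nat -> (r < v)%nat -> exists N, forall k, (N <= k)%nat ->
     nonzero_ind (Zk k j r) = nonzero_ind (Z j r)) ->
  (exists N, forall k, (N <= k)%nat -> forall j, (j < Ntil)%nat -> Gk k j = Gm j) ->
  Un_cv (fun k => Rg (xk k) (Zk k) (Gk k)) (Rg x Z Gm).
Proof.
  intros Hx HZ Hsupp [N HG]. apply (Un_cv_eventually_eq (fun k => Rg (xk k) (Zk k) Gm)).
  - apply Un_cv_scal.
    apply (Un_cv_sumR Ntil (fun k j => tau j * (patch_res v Om patch (Gm j) j (xk k) (Zk k j)
                                                + gc ^ 2 * l0 v (Zk k j)))).
    intros j Hj. apply Un_cv_scal, CV_plus.
    + apply (Un_cv_sumR v (fun k r => (patch_transform (xk k) (Gm j) j r - Zk k j r) ^ 2)).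
      intros r Hr. apply Un_cv_sqr, CV_minus; [|now apply HZ].
      apply (Un_cv_sumR v (fun k col => Om (Gm j) r col * xk k (patch j col))).
      intros col Hcol. apply Un_cv_scal, Hx, Hpatch; auto.
    + apply Un_cv_scal, (Un_cv_sumR v (fun k r => nonzero_ind (Zk k j r))). intros r Hr.
      apply (Un_cv_eventually_eq (fun _ => nonzero_ind (Z j r))); [apply Un_cv_const|].
      destruct (Hsupp j r Hj Hr) as [M HM]. exists M. intros k Hk. now rewrite HM.
  - exists N. intros k Hk. apply (Rmult_eq_compat_l beta), sumR_ext. intros j Hj.
    now rewrite HG.
Qed.

Lemma qi_sub_hi_small xb : forall eps, 0 < eps -> exists d, 0 < d /\
  forall i, (i < Nd)%nat -> forall D, Rabs D < d ->
    qi I0 sigma2 Y s1 s2 c i (l xb i + D) (l xb i) - hi I0 sigma2 Y s1 s2 i (l xb i + D)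
      <= eps * Rabs D.
Proof.
  intros eps Heps.
  destruct (small_enough_forall Nd (fun i d => forall D, Rabs D < d ->
     qi I0 sigma2 Y s1 s2 c i (l xb i + D) (l xb i) - hi I0 sigma2 Y s1 s2 i (l xb i + D)
       <= eps * Rabs D)) as [d [Hd Hgap]].
  - intros i Hi.
    destruct (derivable_quadratic_gap _ _ (/ 2 * c i (l xb i)) _
                (hi_derivable I0 sigma2 Y s1 s2 i (l xb i) HI0 Hsigma) eps Heps) as [d [Hd H]].
    exists d. split; auto. intros d' Hd' Hle D HD.
    unfold qi. replace (l xb i + D - l xb i) with D by ring.
    specialize (H D ltac:(lra)). lra.
  - exists d. split; auto. intros i Hi. apply (Hgap d); auto; lra.
Qed.

Lemma surrogate_sub_Lf_small xb : forall eps, 0 < eps -> exists delta, 0 < delta /\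
  forall y, norm2 Np (vsub y xb) < delta ->
    surrogate xb y - Lf y <= eps * norm2 Np (vsub y xb).
Proof.
  intros eps Heps.
  set (a := fun i => sumR Np (fun p => Rabs (A i p))).
  set (Sa := sumR Nd a).
  assert (Ha : forall i, 0 <= a i) by (intros; apply sumR_ge0; intros; apply Rabs_pos).
  assert (HSa : 0 <= Sa) by (apply sumR_ge0; auto).
  set (eps1 := eps / (Sa + 1)).
  destruct (qi_sub_hi_small xb eps1) as [d [Hd Hgap]]; [apply Rdiv_lt_0_compat; lra|].
  exists (d / (Sa + 1)). split; [apply Rdiv_lt_0_compat; lra|].
  intros y Hy. set (N := norm2 Np (vsub y xb)) in *.
  assert (HN : 0 <= N) by apply norm2_ge0.
  assert (HNd : (Sa + 1) * N < d).
  { apply (Rmult_lt_compat_l (Sa + 1)) in Hy; [|lra].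
    replace ((Sa + 1) * (d / (Sa + 1))) with d in Hy by (field; lra). lra. }
  apply Rle_trans with (sumR Nd (fun i => eps1 * N * a i)).
  - unfold surrogate, Lf, Lfid. rewrite <- sumR_sub. apply sumR_le. intros i Hi.
    set (D := l y i - l xb i).
    assert (HD : Rabs D <= a i * N) by apply Rabs_proj_l_sub.
    assert (a i <= Sa) by (apply (sumR_term_le Nd a); auto).
    assert (a i * N <= Sa * N) by (apply Rmult_le_compat_r; auto).
    specialize (Hgap i Hi D ltac:(lra)).
    replace (l xb i + D) with (l y i) in Hgap by (unfold D; ring).
    assert (eps1 * Rabs D <= eps1 * (a i * N))
      by (apply Rmult_le_compat_l; [unfold eps1; apply Rlt_le, Rdiv_lt_0_compat|]; lra).
    unfold l in *. lra.
  - rewrite sumR_mull. fold Sa.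
    assert (Sa / (Sa + 1) <= 1)
      by (apply (Rmult_le_reg_l (Sa + 1)); [lra | field_simplify; lra]).
    replace (eps1 * N * Sa) with (eps * N * (Sa / (Sa + 1))) by (unfold eps1; field; lra).
    assert (0 <= eps * N) by (apply Rmult_le_pos; lra). nra.
Qed.

Lemma zero_frechet_subgrad x Z Gm g : GG x Z Gm = Fin g ->
  (forall y, inB y -> g <= surrogate x y + Rg y Z Gm) ->
  frechet_subgrad Np (fun y => GG y Z Gm) x (fun _ => 0).
Proof.
  intros Hg Hmaj. exists g. split; auto. intros eps Heps.
  destruct (surrogate_sub_Lf_small x eps Heps) as [delta [Hdelta Hsmall]].
  exists delta. split; auto. intros y Hy.
  unfold GG, Gobj. destruct (inXb Np xmax y) eqn:Ey; simpl; auto.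
  apply inXb_spec in Ey.
  assert (Hdot : dotn Np (fun _ => 0) (vsub y x) = 0).
  { unfold dotn. rewrite (sumR_ext Np _ (fun _ => 0)); [apply sumR_zero | intros; ring]. }
  rewrite Hdot. specialize (Hsmall y Hy). specialize (Hmaj y Ey).
  unfold Lf, Rg in *. lra.
Qed.

Lemma code_entry_zero_or_large n j r : (j < Ntil)%nat -> (r < v)%nat ->
  Zs (S n) j r = 0 \/ gc <= Rabs (Zs (S n) j r).
Proof.
  intros Hj Hr. destruct (code_entry_hard_thresholded n j r Hj Hr) as [| [-> ?]]; auto.
Qed.

Section AccumulationPoint.

Variables (phi : nat -> nat) (xst : nat -> R) (Zst : nat -> nat -> R) (Gst : nat -> nat)
  (Gstar : R).

Hypotheses
  (Hphi : forall k, (phi k < phi (S k))%nat)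
  (Hxcv : vec_cv Np (fun k => xs (phi k)) xst)
  (HZcv : forall j r, (j < Ntil)%nat -> (r < v)%nat ->
      Un_cv (fun k => Zs (phi k) j r) (Zst j r))
  (HGev : exists k0, forall k, (k0 <= k)%nat -> forall j, (j < Ntil)%nat -> Gs (phi k) j = Gst j)
  (Hobj : Un_cv objective Gstar).

Lemma limit_inX : inB xst.
Proof. apply (inX_Un_cv _ _ _ _ Hxcv). intros. apply iterate_inX. Qed.

Lemma limit_admissible : admissible Gst.
Proof.
  destruct HGev as [k0 HG]. intros j Hj. rewrite <- (HG k0 (le_n _) j Hj).
  apply iterate_admissible; auto.
Qed.

(* Entries of the codes are [0] or at least [gc] in magnitude, so their supports converge. *)
Lemma limit_support j r : (j < Ntil)%nat -> (r < v)%nat ->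
  exists N, forall k, (N <= k)%nat -> nonzero_ind (Zs (phi k) j r) = nonzero_ind (Zst j r).
Proof.
  intros Hj Hr. unfold nonzero_ind. destruct (Req_EM_T (Zst j r) 0) as [E|E].
  - destruct (HZcv j r Hj Hr gc Hgc) as [N HN]. exists (max N 1). intros k Hk.
    specialize (HN k ltac:(lia)). unfold Rdist in HN. rewrite E, Rminus_0_r in HN.
    pose proof (strictly_increasing_ge phi Hphi k).
    destruct (phi k) as [|m]; [lia|].
    destruct (code_entry_zero_or_large m j r Hj Hr) as [E2|E2]; [|lra].
    rewrite E2. destruct (Req_EM_T 0 0); [reflexivity | lra].
  - assert (Hp : 0 < Rabs (Zst j r)) by now apply Rabs_pos_lt.
    destruct (HZcv j r Hj Hr _ Hp) as [N HN]. exists N. intros k Hk.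
    specialize (HN k Hk). unfold Rdist in HN.
    destruct (Req_EM_T (Zs (phi k) j r) 0) as [E2|E2]; auto.
    rewrite E2, Rminus_0_l, Rabs_Ropp in HN. lra.
Qed.

Lemma Reg_subseq_Un_cv :
  Un_cv (fun k => Rg (xs (phi k)) (Zs (phi k)) (Gs (phi k))) (Rg xst Zst Gst).
Proof. apply Reg_Un_cv; auto using limit_support. Qed.

Lemma limit_objective : Gstar = Lf xst + Rg xst Zst Gst.
Proof.
  apply (UL_sequence (fun k => objective (phi k))).
  - now apply Un_cv_subseq.
  - apply CV_plus; [now apply Lf_Un_cv | apply Reg_subseq_Un_cv].
Qed.

Lemma limit_codes_optimal Z Gm : admissible Gm -> Rg xst Zst Gst <= Rg xst Z Gm.
Proof.
  intros HGm.
  apply (Un_cv_le _ (fun k => Rg (xs (phi k)) Z Gm) _ _ Reg_subseq_Un_cv).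
  - apply Reg_Un_cv; auto using Un_cv_const.
    + intros j r _ _. exists 0%nat. auto.
    + exists 0%nat. auto.
  - exists 1%nat. intros k Hk. pose proof (strictly_increasing_ge phi Hphi k).
    destruct (phi k) as [|m]; [lia|]. now apply HZG.
Qed.

Lemma next_Un_cv : vec_cv Np (fun k => xs (S (phi k))) xst.
Proof.
  intros p Hp.
  apply (Un_cv_ext (fun k => xs (phi k) p + (xs (S (phi k)) p - xs (phi k) p))); [intros; ring|].
  rewrite <- (Rplus_0_r (xst p)). apply CV_plus; [now apply Hxcv|].
  apply (Un_cv_squeeze0 _ (fun k => norm2 Np (vsub (xs (S (phi k))) (xs (phi k))))).
  - apply (Un_cv_subseq (fun n => norm2 Np (vsub (xs (S n)) (xs n)))); auto using step_Un_cv.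
  - intros k. exact (Rabs_coord_le_norm2 Np (vsub (xs (S (phi k))) (xs (phi k))) p Hp).
Qed.

Lemma limit_image_optimal y : inB y -> Gstar <= surrogate xst y + Rg y Zst Gst.
Proof.
  intros Hy. rewrite limit_objective, <- surrogate_diag.
  pose proof limit_inX.
  apply (Un_cv_le
    (fun k => surrogate (xs (phi k)) (xs (S (phi k))) + Rg (xs (S (phi k))) (Zs (phi k)) (Gs (phi k)))
    (fun k => surrogate (xs (phi k)) y + Rg y (Zs (phi k)) (Gs (phi k)))).
  - apply CV_plus.
    + apply surrogate_Un_cv; auto using next_Un_cv, iterate_inX.
    + apply Reg_Un_cv; auto using next_Un_cv, limit_support.
  - apply CV_plus.
    + apply surrogate_Un_cv; auto using iterate_inX. intros p _. apply Un_cv_const.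
    + apply Reg_Un_cv; auto using limit_support. intros p _. apply Un_cv_const.
  - exists 0%nat. intros k _. exact (proj2 (image_update_optimal (phi k) y Hy)).
Qed.

Lemma limit_zero_limiting_subgrad :
  limiting_subgrad Np (fun x => GG x Zst Gst) xst (fun _ => 0).
Proof.
  pose proof limit_inX as Hx.
  assert (HG : GG xst Zst Gst = Fin Gstar) by (rewrite limit_objective; now apply Gobj_inX).
  exists Gstar, (fun _ => xst), (fun _ _ => 0), (fun _ => Gstar).
  split; [exact HG|]. split; [intros; exact HG|].
  split; [intros p _; apply Un_cv_const|]. split; [apply Un_cv_const|].
  split; [|intros p _; apply Un_cv_const].
  intros k. apply (zero_frechet_subgrad xst Zst Gst Gstar); auto using limit_image_optimal.
Qed.

End AccumulationPoint.

Lemma accumulation_point_properties Gstar xst Zst Gst :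
  Un_cv objective Gstar -> accum_point Np v Ntil xs Zs Gs xst Zst Gst ->
  GG xst Zst Gst = Fin Gstar /\
  limiting_subgrad Np (fun x => GG x Zst Gst) xst (fun _ => 0) /\
  admissible Gst /\
  (forall Z Gm, admissible Gm -> ER_le (GG xst Zst Gst) (GG xst Z Gm)).
Proof.
  intros Hobj [phi [Hphi [Hx [HZ HG]]]].
  assert (Hxst : inB xst) by (eapply limit_inX; eauto).
  split; [|split; [|split]].
  - assert (E : Gstar = Lf xst + Rg xst Zst Gst) by (eapply limit_objective; eauto).
    rewrite E. now apply Gobj_inX.
  - eapply limit_zero_limiting_subgrad; eauto.
  - eapply limit_admissible; eauto.
  - intros Z Gm HGm. rewrite !Gobj_inX by auto. simpl.
    enough (Rg xst Zst Gst <= Rg xst Z Gm) by lra.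
    eapply limit_codes_optimal; eauto.
Qed.

Lemma spultra_convergence :
  (exists M, forall n,
      (forall p, (p < Np)%nat -> Rabs (xs n p) <= M) /\
      (forall j r, (j < Ntil)%nat -> (r < v)%nat -> Rabs (Zs n j r) <= M) /\
      (forall j, (j < Ntil)%nat -> INR (Gs n j) <= M)) /\
  (exists (Gstar : R) (g : nat -> R),
      (forall n, GG (xs n) (Zs n) (Gs n) = Fin (g n)) /\
      (forall n, g (S n) <= g n) /\
      Un_cv g Gstar /\
      (forall xst Zst Gst, accum_point Np v Ntil xs Zs Gs xst Zst Gst ->
         GG xst Zst Gst = Fin Gstar /\
         limiting_subgrad Np (fun x => GG x Zst Gst) xst (fun _ => 0) /\
         admissible Gst /\
         (forall Z Gm, admissible Gm -> ER_le (GG xst Zst Gst) (GG xst Z Gm)))) /\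
  Un_cv (fun n => norm2 Np (vsub (xs (S n)) (xs n))) 0.
Proof.
  split; [exact iterates_bounded | split; [|exact step_Un_cv]].
  destruct objective_Un_cv as [Gstar Hobj].
  exists Gstar, objective. split; [|split; [|split]].
  - intros n. apply Gobj_inX, iterate_inX.
  - exact objective_decreasing.
  - exact Hobj.
  - intros xst Zst Gst. now apply accumulation_point_properties.
Qed.

End SPULTRA.

Theorem theorem1
  (Nd Np v Ntil K : nat) (A : nat -> nat -> R)
  (I0 sigma2 xmax beta gc : R) (Y s1 s2 tau : nat -> R)
  (patch : nat -> nat -> nat) (Om : nat -> nat -> nat -> R)
  (c : nat -> R -> R)
  (xs : nat -> nat -> R) (Zs : nat -> nat -> nat -> R) (Gs : nat -> nat -> nat)
  (HA : forall i p, (i < Nd)%nat -> (p < Np)%nat -> 0 <= A i p)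
  (HI0 : 0 < I0) (Hsigma : 0 <= sigma2) (Hxmax : 0 < xmax)
  (Hpatch : forall j r, (j < Ntil)%nat -> (r < v)%nat -> (patch j r < Np)%nat)
  (Hcover : forall p, (p < Np)%nat ->
      exists j r, (j < Ntil)%nat /\ (r < v)%nat /\ patch j r = p)
  (HOm : forall k, (k < K)%nat -> nonsingular v (Om k))
  (Htau : forall j, (j < Ntil)%nat -> 0 < tau j)
  (Hbeta : 0 < beta) (Hgc : 0 < gc)
  (Hcpos : forall i l, (i < Nd)%nat -> 0 <= l -> 0 < c i l)
  (Hccont : forall i l, (i < Nd)%nat -> 0 <= l ->
      limit1_in (c i) (fun t => 0 <= t) (c i l) l)
  (Hcmaj : forall i l lbar, (i < Nd)%nat -> 0 <= l -> 0 <= lbar ->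
      hi I0 sigma2 Y s1 s2 i l <= qi I0 sigma2 Y s1 s2 c i l lbar)
  (Hx0 : inX Np xmax (xs 0%nat))
  (HG0 : forall j, (j < Ntil)%nat -> (Gs 0%nat j < K)%nat)
  (Himg : forall n x,
      ER_le (Fmaj Nd Np v Ntil A I0 sigma2 Y s1 s2 c xmax Om patch tau beta gc
               (xs (S n)) (Zs n) (Gs n) (xs n))
            (Fmaj Nd Np v Ntil A I0 sigma2 Y s1 s2 c xmax Om patch tau beta gc
               x (Zs n) (Gs n) (xs n)))
  (HZG_feas : forall n j, (j < Ntil)%nat -> (Gs (S n) j < K)%nat)
  (HZG : forall n Z Gm, (forall j, (j < Ntil)%nat -> (Gm j < K)%nat) ->
      Reg v Ntil Om patch tau beta gc (xs (S n)) (Zs (S n)) (Gs (S n))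
      <= Reg v Ntil Om patch tau beta gc (xs (S n)) Z Gm) :
  let G := Gobj Nd Np v Ntil A I0 sigma2 Y s1 s2 xmax Om patch tau beta gc in
  (* (i) boundedness *)
  (exists M, forall n,
      (forall p, (p < Np)%nat -> Rabs (xs n p) <= M) /\
      (forall j r, (j < Ntil)%nat -> (r < v)%nat -> Rabs (Zs n j r) <= M) /\
      (forall j, (j < Ntil)%nat -> INR (Gs n j) <= M)) /\
  (exists (Gstar : R) (g : nat -> R),
      (* (ii) monotone, convergent to a finite limit *)
      (forall n, G (xs n) (Zs n) (Gs n) = Fin (g n)) /\
      (forall n, g (S n) <= g n) /\
      Un_cv g Gstar /\
      (forall xst Zst Gst, accum_point Np v Ntil xs Zs Gs xst Zst Gst ->
         (* (iii) *)
         G xst Zst Gst = Fin Gstar /\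
         (* (iv) partial optimality *)
         limiting_subgrad Np (fun x => G x Zst Gst) xst (fun _ => 0) /\
         (forall j, (j < Ntil)%nat -> (Gst j < K)%nat) /\
         (forall Z Gm, (forall j, (j < Ntil)%nat -> (Gm j < K)%nat) ->
            ER_le (G xst Zst Gst) (G xst Z Gm)))) /\
  (* (v) *)
  Un_cv (fun n => norm2 Np (vsub (xs (S n)) (xs n))) 0.
Proof.
  intros G. eapply spultra_convergence; eassumption.
Qed.
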